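(* For each integer $k\ge2$ there exists a constant $C_k>0$ such that the following holds. Let $(b_j)_{j\ge1}$ be any increasing sequence of positive numbers with $\sum_{j\ge1}1/b_j<+\infty$, let $f(z)=\prod_{j=1}^\infty(1+z/b_j)$, and let $F(s)=\ln f(e^s)=\sum_{j=1}^\infty\ln(1+e^s/b_j)$, $s\in\mathbb{R}$. Then $$|F^{(k)}(s)|\le C_k\,F''(s)\quad\text{for every } s\in\mathbb{R}.$$
   Context: $F^{(k)}$ denotes the $k$-th derivative of the real function $F$. *)

From Stdlib Require Import Reals.
From Coquelicot Require Import Coquelicot.
Open Scope R_scope.

(* F(s) = ln f(e^s) = sum_{j>=1} ln(1 + e^s / b_j); the sequence b is indexed
   from 0 here (b 0 plays the role of b_1). *)
Definition Flog (b : nat -> R) (s : R) : R :=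
  Series (fun j => ln (1 + exp s / b j)).

From Stdlib Require Import Reals Lra Lia FunctionalExtensionality.
From Coquelicot Require Import Coquelicot.
Open Scope R_scope.

(* The j-th summand ln(1 + e^s/b_j) of F has derivative the logistic function
   σ_j(s) = e^s/(b_j + e^s), which satisfies σ_j' = σ_j(1 - σ_j).  Hence its
   derivatives are P_m(σ_j) for the polynomials P_0 = X,
   P_(m+1) = P_m' X(1 - X), and for k >= 2 the k-th derivative is
   P_(k-2)'(σ_j) σ_j(1 - σ_j), i.e. P_(k-2)'(σ_j) times the second derivative.
   Since 0 < σ_j < 1, the factor P_(k-2)' is bounded by a constant depending
   on k only.  All derivatives of the summands are O(e^s/b_j) locally
   uniformly in s, so F may be differentiated term by term and the bound
   passes to the sums. *)

(* [ex_series_le] on [R]; unification does not find the complete normed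
   module by itself. *)
Lemma ex_series_Rabs_le (a M : nat -> R) :
  (forall n, Rabs (a n) <= M n) -> ex_series M -> ex_series a.
Proof. intros HaM HM. exact (ex_series_le (V := R_CompleteNormedModule) a M HaM HM). Qed.

Lemma Series_Rabs_le_scal (a c : nat -> R) (C : R) :
  (forall n, Rabs (a n) <= C * c n) -> ex_series c -> Rabs (Series a) <= C * Series c.
Proof.
  intros Hac Hc.
  assert (HCc : ex_series (fun n => C * c n)) by exact (ex_series_scal_l C c Hc).
  rewrite <- Series_scal_l.
  eapply Rle_trans; [apply Series_Rabs | apply Series_le].
  - apply (ex_series_Rabs_le _ (fun n => C * c n)); [| exact HCc].
    intro n. rewrite Rabs_Rabsolu. apply Hac.
  - intro n. split; [apply Rabs_pos | apply Hac].
  - exact HCc.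
Qed.

Lemma Series_tail_lt (M : nat -> R) (eps : R) :
  ex_series M -> 0 < eps -> exists N, Series (fun k => M (S N + k)%nat) < eps.
Proof.
  intros HM Heps.
  destruct (proj1 (is_series_Reals M (Series M)) (Series_correct _ HM) eps Heps) as [N HN].
  exists N. specialize (HN N (le_n _)).
  rewrite (Series_incr_n M (S N)) in HN by (auto with arith). simpl pred in HN.
  unfold Rdist in HN.
  set (T := Series (fun k => M (S N + k)%nat)) in *.
  replace (sum_f_R0 M N - (sum_f_R0 M N + T)) with (- T) in HN by ring.
  rewrite Rabs_Ropp in HN. pose proof (Rle_abs T). lra.
Qed.

Lemma is_derive_sum_f_R0 (g g' : nat -> R -> R) (x : R) (N : nat) :
  (forall j, is_derive (g j) x (g' j x)) ->
  is_derive (fun y => sum_f_R0 (fun j => g j y) N) x (sum_f_R0 (fun j => g' j x) N).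
Proof.
  intro Hg. induction N as [|N IH]; simpl; [apply Hg |].
  apply (is_derive_plus (fun y => sum_f_R0 (fun j => g j y) N)); [exact IH | apply Hg].
Qed.

Lemma sum_f_R0_diff_quot (a b c : nat -> R) (h : R) (N : nat) :
  sum_f_R0 (fun j => (a j - b j) / h - c j) N =
  (sum_f_R0 a N - sum_f_R0 b N) / h - sum_f_R0 c N.
Proof. induction N as [|N IH]; simpl; [| rewrite IH]; unfold Rdiv; ring. Qed.

Section TermwiseDerivative.

Variables (g g' : nat -> R -> R) (M : nat -> R) (x d : R).
Hypothesis d_pos : 0 < d.
Hypothesis g_derive : forall j y, Rabs (y - x) < d -> is_derive (g j) y (g' j y).
Hypothesis g'_bound : forall j y, Rabs (y - x) < d -> Rabs (g' j y) <= M j.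
Hypothesis M_summable : ex_series M.
Hypothesis g_summable : ex_series (fun j => g j x).

Let center_in_ball : Rabs (x - x) < d.
Proof. rewrite Rminus_diag, Rabs_R0. exact d_pos. Qed.

Let diff_quot (h : R) (j : nat) : R := (g j (x + h) - g j x) / h - g' j x.

Lemma g_variation j h : Rabs h < d -> Rabs (g j (x + h) - g j x) <= M j * Rabs h.
Proof.
  intro Hh. replace (Rabs h) with (Rabs (x + h - x)) by (f_equal; ring).
  apply (bounded_variation (g j) (g' j)). intros t Ht.
  replace (x + h - x) with h in Ht by ring.
  split; [apply g_derive | apply g'_bound]; lra.
Qed.

Lemma ex_series_g_near h : Rabs h < d -> ex_series (fun j => g j (x + h)).
Proof.
  intro Hh.
  assert (Hdiff : ex_series (fun j => g j (x + h) - g j x)).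
  { apply (ex_series_Rabs_le _ (fun j => M j * Rabs h)).
    - intro j. apply g_variation, Hh.
    - apply ex_series_scal_r, M_summable. }
  apply (ex_series_ext (fun j => (g j (x + h) - g j x) + g j x)).
  - intro j. simpl. ring.
  - exact (ex_series_plus _ _ Hdiff g_summable).
Qed.

Lemma diff_quot_bound h j : h <> 0 -> Rabs h < d -> Rabs (diff_quot h j) <= 2 * M j.
Proof.
  intros Hh0 Hh. unfold diff_quot.
  assert (Hq : Rabs ((g j (x + h) - g j x) / h) <= M j).
  { unfold Rdiv. rewrite Rabs_mult, Rabs_inv.
    apply (Rmult_le_reg_r (Rabs h)); [apply Rabs_pos_lt, Hh0 |].
    rewrite Rmult_assoc, Rinv_l, Rmult_1_r by (apply Rabs_no_R0, Hh0).
    apply g_variation, Hh. }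
  pose proof (g'_bound j x center_in_ball).
  eapply Rle_trans; [apply Rabs_triang |]. rewrite Rabs_Ropp. lra.
Qed.

Lemma Series_diff_quot h : h <> 0 -> Rabs h < d ->
  Series (diff_quot h) =
  (Series (fun j => g j (x + h)) - Series (fun j => g j x)) / h - Series (fun j => g' j x).
Proof.
  intros Hh0 Hh.
  assert (Hg' : ex_series (fun j => g' j x))
    by (apply (ex_series_Rabs_le _ M); [intro j; apply g'_bound, center_in_ball | exact M_summable]).
  assert (Hdiff : ex_series (fun j => g j (x + h) - g j x))
    by exact (ex_series_minus (fun j => g j (x + h)) _ (ex_series_g_near h Hh) g_summable).
  unfold diff_quot, Rdiv.
  rewrite Series_minus, Series_scal_r, Series_minus; auto.
  - apply ex_series_g_near, Hh.
  - apply ex_series_scal_r, Hdiff.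
Qed.

Lemma is_derive_Series :
  is_derive (fun y => Series (fun j => g j y)) x (Series (fun j => g' j x)).
Proof.
  apply is_derive_Reals. intros eps Heps.
  destruct (Series_tail_lt M (eps / 4) M_summable) as [N HN]; [lra |].
  pose proof (is_derive_sum_f_R0 g g' x N (fun j => g_derive j x center_in_ball)) as Hfinite.
  destruct (proj1 (is_derive_Reals _ _ _) Hfinite (eps / 2)) as [del Hdel]; [lra |].
  assert (Hmin : 0 < Rmin del d) by (apply Rmin_pos; [apply cond_pos | exact d_pos]).
  exists (mkposreal _ Hmin). intros h Hh0 Hh. simpl in Hh.
  assert (Hh1 : Rabs h < del) by (eapply Rlt_le_trans; [exact Hh | apply Rmin_l]).
  assert (Hh2 : Rabs h < d) by (eapply Rlt_le_trans; [exact Hh | apply Rmin_r]).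
  rewrite <- Series_diff_quot by assumption.
  assert (HD : ex_series (diff_quot h)).
  { apply (ex_series_Rabs_le _ (fun j => 2 * M j)).
    - intro j. apply diff_quot_bound; assumption.
    - exact (ex_series_scal_l 2 M M_summable). }
  (* Split at N: the head is the difference quotient of a partial sum, the
     tail is at most twice the tail of M. *)
  rewrite (Series_incr_n _ (S N)) by (auto with arith). simpl pred.
  assert (Hhead : Rabs (sum_f_R0 (diff_quot h) N) < eps / 2).
  { unfold diff_quot. rewrite sum_f_R0_diff_quot. apply Hdel; assumption. }
  assert (Htail : Rabs (Series (fun k => diff_quot h (S N + k))) <=
                  2 * Series (fun k => M (S N + k)%nat)).
  { apply Series_Rabs_le_scal.
    - intro k. apply diff_quot_bound; assumption.
    - apply (ex_series_incr_n M (S N)), M_summable. }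
  eapply Rle_lt_trans; [apply Rabs_triang | lra].
Qed.

End TermwiseDerivative.

Inductive is_poly : (R -> R) -> Prop :=
  | is_poly_const c : is_poly (fun _ => c)
  | is_poly_id : is_poly (fun y => y)
  | is_poly_plus p q : is_poly p -> is_poly q -> is_poly (fun y => p y + q y)
  | is_poly_mult p q : is_poly p -> is_poly q -> is_poly (fun y => p y * q y).

Lemma ex_derive_poly p : is_poly p -> forall y, ex_derive p y.
Proof.
  induction 1; intro y.
  - apply ex_derive_const.
  - apply ex_derive_id.
  - apply (ex_derive_plus p q); auto.
  - apply (ex_derive_mult p q); auto.
Qed.

Lemma is_poly_Derive p : is_poly p -> is_poly (Derive p).
Proof.
  induction 1 as [c | | p q Hp IHp Hq IHq | p q Hp IHp Hq IHq].
  - replace (Derive (fun _ => c)) with (fun _ : R => 0).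
    + apply is_poly_const.
    + extensionality y. symmetry. apply Derive_const.
  - replace (Derive (fun y => y)) with (fun _ : R => 1).
    + apply is_poly_const.
    + extensionality y. symmetry. apply Derive_id.
  - replace (Derive (fun y => p y + q y)) with (fun y => Derive p y + Derive q y).
    + apply is_poly_plus; assumption.
    + extensionality y. symmetry. apply Derive_plus; apply ex_derive_poly; assumption.
  - replace (Derive (fun y => p y * q y)) with (fun y => Derive p y * q y + p y * Derive q y).
    + apply is_poly_plus; apply is_poly_mult; assumption.
    + extensionality y. symmetry. apply Derive_mult; apply ex_derive_poly; assumption.
Qed.

Lemma is_poly_bounded p a b : is_poly p -> exists B, forall y, a <= y <= b -> Rabs (p y) <= B.
Proof.
  induction 1 as [c | | p q Hp [Bp HBp] Hq [Bq HBq] | p q Hp [Bp HBp] Hq [Bq HBq]].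
  - exists (Rabs c). intros y _. apply Rle_refl.
  - exists (Rabs a + Rabs b). intros y Hy. unfold Rabs. repeat destruct Rcase_abs; lra.
  - exists (Bp + Bq). intros y Hy.
    eapply Rle_trans; [apply Rabs_triang | apply Rplus_le_compat; auto].
  - exists (Bp * Bq). intros y Hy. rewrite Rabs_mult.
    apply Rmult_le_compat; auto; apply Rabs_pos.
Qed.

Fixpoint logistic_poly (m : nat) : R -> R :=
  match m with
  | O => fun y => y
  | S m => fun y => Derive (logistic_poly m) y * (y * (1 - y))
  end.

Lemma is_poly_logistic_poly m : is_poly (logistic_poly m).
Proof.
  induction m as [|m IH]; simpl.
  - apply is_poly_id.
  - apply is_poly_mult; [apply is_poly_Derive, IH |].
    apply is_poly_mult; [apply is_poly_id |].
    replace (Rminus 1) with (fun y => 1 + -1 * y) by (extensionality y; ring).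
    apply is_poly_plus; [| apply is_poly_mult]; constructor.
Qed.

Lemma is_derive_logistic_poly_comp (m : nat) (sig : R -> R) (s : R) :
  is_derive sig s (sig s * (1 - sig s)) ->
  is_derive (fun t => logistic_poly m (sig t)) s (logistic_poly (S m) (sig s)).
Proof.
  intro Hsig. simpl. rewrite Rmult_comm.
  apply (is_derive_comp (logistic_poly m) sig); [| exact Hsig].
  apply Derive_correct, ex_derive_poly, is_poly_logistic_poly.
Qed.

Lemma logistic_poly_1 y : logistic_poly 1 y = y * (1 - y).
Proof. simpl. rewrite Derive_id. ring. Qed.

Lemma logistic_poly_S_bound m :
  exists B, 0 <= B /\ forall y, 0 <= y <= 1 -> Rabs (logistic_poly (S m) y) <= B * (y * (1 - y)).
Proof.
  destruct (is_poly_bounded _ 0 1 (is_poly_Derive _ (is_poly_logistic_poly m))) as [B HB].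
  exists B. split.
  - eapply Rle_trans; [apply Rabs_pos | apply (HB 0); lra].
  - intros y Hy. simpl. rewrite Rabs_mult, (Rabs_right (y * (1 - y))) by nra.
    apply Rmult_le_compat_r; [nra | apply HB, Hy].
Qed.

Lemma logistic_poly_bound m :
  exists K, 0 <= K /\ forall y, 0 <= y <= 1 -> Rabs (logistic_poly m y) <= K * y.
Proof.
  destruct m as [|m].
  - exists 1. split; [lra |]. intros y Hy. simpl. rewrite Rabs_right; lra.
  - destruct (logistic_poly_S_bound m) as [B [HB0 HB]].
    exists B. split; [exact HB0 |]. intros y Hy.
    eapply Rle_trans; [apply HB, Hy | nra].
Qed.

Definition logistic (c s : R) : R := exp s / (c + exp s).

Section Logistic.

Variable c : R.
Hypothesis c_pos : 0 < c.

Lemma logistic_bounds s : 0 < logistic c s < 1.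
Proof.
  pose proof (exp_pos s). unfold logistic. split.
  - apply Rdiv_lt_0_compat; lra.
  - apply Rlt_div_l; lra.
Qed.

Lemma logistic_le s : logistic c s <= exp s / c.
Proof.
  pose proof (exp_pos s). unfold logistic, Rdiv.
  apply Rmult_le_compat_l; [lra | apply Rinv_le_contravar; lra].
Qed.

Lemma is_derive_logistic s : is_derive (logistic c) s (logistic c s * (1 - logistic c s)).
Proof.
  pose proof (exp_pos s). unfold logistic.
  auto_derive; [lra |]. field. lra.
Qed.

Lemma is_derive_ln_1p_exp s : is_derive (fun t => ln (1 + exp t / c)) s (logistic c s).
Proof.
  pose proof (exp_pos s). unfold logistic.
  assert (0 < exp s / c) by (apply Rdiv_lt_0_compat; lra).
  auto_derive; [lra |]. field. lra.
Qed.

Lemma ln_1p_exp_bound s : Rabs (ln (1 + exp s / c)) <= exp s / c.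
Proof.
  pose proof (exp_pos s).
  assert (0 < exp s / c) by (apply Rdiv_lt_0_compat; lra).
  assert (0 <= ln (1 + exp s / c)) by (rewrite <- ln_1; apply ln_le; lra).
  assert (ln (1 + exp s / c) <= exp s / c).
  { rewrite <- (ln_exp (exp s / c)) at 2. apply ln_le; [lra | apply exp_ineq1_le]. }
  rewrite Rabs_right; lra.
Qed.

End Logistic.

Definition summand_deriv (c : R) (m : nat) (s : R) : R :=
  match m with
  | O => ln (1 + exp s / c)
  | S m => logistic_poly m (logistic c s)
  end.

Lemma is_derive_summand_deriv c m s :
  0 < c -> is_derive (summand_deriv c m) s (summand_deriv c (S m) s).
Proof.
  intro Hc. destruct m as [|m].
  - apply is_derive_ln_1p_exp, Hc.
  - apply is_derive_logistic_poly_comp, is_derive_logistic, Hc.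
Qed.

Lemma summand_deriv_bound m :
  exists K, 0 <= K /\ forall c s, 0 < c -> Rabs (summand_deriv c m s) <= K * (exp s / c).
Proof.
  destruct m as [|m].
  - exists 1. split; [lra |]. intros c s Hc. rewrite Rmult_1_l. apply ln_1p_exp_bound, Hc.
  - destruct (logistic_poly_bound m) as [K [HK0 HK]].
    exists K. split; [exact HK0 |]. intros c s Hc.
    pose proof (logistic_bounds c Hc s).
    eapply Rle_trans; [apply HK; lra |].
    apply Rmult_le_compat_l; [exact HK0 | apply logistic_le, Hc].
Qed.

Section Flog.

Variable b : nat -> R.
Hypothesis b_pos : forall j, 0 < b j.
Hypothesis b_inv_summable : ex_series (fun j => / b j).

Lemma ex_series_summand_deriv m s : ex_series (fun j => summand_deriv (b j) m s).
Proof.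
  destruct (summand_deriv_bound m) as [K [_ HK]].
  apply (ex_series_Rabs_le _ (fun j => K * exp s * / b j)).
  - intro j. rewrite Rmult_assoc. apply HK, b_pos.
  - exact (ex_series_scal_l (K * exp s) _ b_inv_summable).
Qed.

Lemma Derive_n_Flog m s : Derive_n (Flog b) m s = Series (fun j => summand_deriv (b j) m s).
Proof.
  revert s. induction m as [|m IH]; intro s; [reflexivity |].
  simpl. rewrite (Derive_ext _ _ s IH).
  apply is_derive_unique.
  destruct (summand_deriv_bound (S m)) as [K [HK0 HK]].
  apply (is_derive_Series (fun j => summand_deriv (b j) m) (fun j => summand_deriv (b j) (S m))
           (fun j => K * exp (s + 1) * / b j) s 1).
  - lra.
  - intros j y _. apply is_derive_summand_deriv, b_pos.
  - intros j y Hy. eapply Rle_trans; [apply HK, b_pos |].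
    rewrite Rmult_assoc. apply Rmult_le_compat_l; [exact HK0 |].
    apply Rmult_le_compat_r; [left; apply Rinv_0_lt_compat, b_pos |].
    apply Rabs_def2 in Hy. left. apply exp_increasing. lra.
  - exact (ex_series_scal_l (K * exp (s + 1)) _ b_inv_summable).
  - apply ex_series_summand_deriv.
Qed.

End Flog.

Theorem lemma4p5 :
  forall k : nat, (2 <= k)%nat ->
  exists C : R, 0 < C /\
    forall b : nat -> R,
      (forall j, 0 < b j) ->
      (forall j, b j < b (S j)) ->
      ex_series (fun j => / b j) ->
      forall s : R,
        Rabs (Derive_n (Flog b) k s) <= C * Derive_n (Flog b) 2 s.
Proof.
  intros k Hk. destruct k as [|[|m]]; [lia | lia |].
  destruct (logistic_poly_S_bound m) as [B [HB0 HB]].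
  exists (B + 1). split; [lra |].
  intros b b_pos _ b_inv_summable s.
  rewrite !(Derive_n_Flog b b_pos b_inv_summable).
  apply Series_Rabs_le_scal; [| apply ex_series_summand_deriv; assumption].
  intro j. cbn [summand_deriv]. rewrite logistic_poly_1.
  pose proof (logistic_bounds (b j) (b_pos j) s).
  eapply Rle_trans; [apply HB; lra |].
  apply Rmult_le_compat_r; [nra | lra].
Qed.
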